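(* Let $R$ be an associative ring with identity $1$ and an involution $*$, and let $p,q\in R$ be projections. Then the following are equivalent: (1) $p(1-q)$ and $(1-p)q$ are both MP invertible; (2) $p-q$ is MP invertible.
   Context: An involution on $R$ is a map $a\mapsto a^*$ with $(a^* )^*=a$, $(a+b)^*=a^*+b^*$, $(ab)^*=b^*a^*$. An element $a$ is MP invertible if there is $b$ with $aba=a$, $bab=b$, $(ab)^*=ab$, $(ba)^*=ba$; this $b$ is unique and written $a^{\dagger}$. A projection is an element $p$ with $p^2=p=p^*$. *)

From mathcomp Require Import all_boot all_algebra.
Set Implicit Arguments. Unset Strict Implicit. Unset Printing Implicit Defensive.
Import GRing.Theory.
Local Open Scope ring_scope.

Definition involution (R : pzRingType) (star : R -> R) : Prop :=
  [/\ forall a, star (star a) = a,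
      forall a b, star (a + b) = star a + star b
    & forall a b, star (a * b) = star b * star a].

Definition is_MP_inverse (R : pzRingType) (star : R -> R) (a b : R) : Prop :=
  [/\ a * b * a = a, b * a * b = b, star (a * b) = a * b & star (b * a) = b * a].

Definition MP_invertible (R : pzRingType) (star : R -> R) (a : R) : Prop :=
  exists b, is_MP_inverse star a b.

Definition projection (R : pzRingType) (star : R -> R) (p : R) : Prop :=
  p * p = p /\ star p = p.

From mathcomp Require Import all_boot all_algebra.
Set Implicit Arguments. Unset Strict Implicit. Unset Printing Implicit Defensive.
Local Open Scope ring_scope.
Import GRing.Theory.

(* For projections p, q the difference p - q = p(1-q) - (1-p)q splits into parts
   u, v with u^* v = 0 = u v^*, so MP inverses of the parts add up to one of p - q.
   Conversely p(1-q) = p(p-q), and the hermitian projection p intertwines the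
   hermitian element p - q with 1 - q; this forces p to commute with the range
   projection (p-q)(p-q)^+, whence (p(1-q))^+ = (p-q)^+ p.  Applied to 1 - p and
   1 - q, the same argument handles (1-p)q. *)

Section StarRing.
Variables (R : pzRingType) (star : R -> R).
Hypothesis star_invol : involution star.

Lemma starK a : star (star a) = a. Proof. by case: star_invol. Qed.
Lemma starD a b : star (a + b) = star a + star b. Proof. by case: star_invol. Qed.
Lemma starM a b : star (a * b) = star b * star a. Proof. by case: star_invol. Qed.

Lemma star0 : star 0 = 0.
Proof. by apply: (addrI (star 0)); rewrite -starD !addr0. Qed.

Lemma starN a : star (- a) = - star a.
Proof. by apply: (addrI (star a)); rewrite -starD !subrr star0. Qed.

Lemma starB a b : star (a - b) = star a - star b.
Proof. by rewrite starD starN. Qed.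

Lemma star1 : star 1 = 1.
Proof. by have := starM (star 1) 1; rewrite mulr1 !starK mulr1 => <-. Qed.

Lemma projection_compl p : projection star p -> projection star (1 - p).
Proof.
case=> pp sp; split; last by rewrite starB star1 sp.
by rewrite mulrBr mulr1 mulrBl mul1r pp subrr subr0.
Qed.

Lemma MP_inverseN a b : is_MP_inverse star a b -> is_MP_inverse star (- a) (- b).
Proof. by case=> h1 h2 h3 h4; split; rewrite ?mulrNN ?mulrN ?h1 ?h2 ?h3 ?h4. Qed.

Lemma MP_inverse_hermitian_comm a b :
  star a = a -> is_MP_inverse star a b -> a * b = b * a.
Proof.
move=> sa [h1 _ h3 h4].
have ab_star : a * b = star b * a by rewrite -h3 starM sa.
have ba_star : b * a = a * star b by rewrite -h4 starM sa.
have ab_abba : a * b = a * b * (b * a).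
  by rewrite {2}ab_star !mulrA -(mulrA (star b) a b) -(mulrA _ (a * b) a) h1 -ab_star.
have ba_abba : b * a = a * b * (b * a) by rewrite {2}ba_star mulrA h1 -ba_star.
by rewrite ab_abba -ba_abba.
Qed.

(* u^+ = u^+ (u^+)^* u^* = u^* (u^+)^* u^+ *)
Lemma MP_inverse_mul_eq0 u u' v :
  is_MP_inverse star u u' -> star u * v = 0 -> u' * v = 0.
Proof.
case=> _ h2 h3 _ uv0.
have -> : u' = u' * star u' * star u by rewrite -mulrA -starM h3 mulrA h2.
by rewrite -(mulrA _ (star u) v) uv0 mulr0.
Qed.

Lemma mul_MP_inverse_eq0 u u' v :
  is_MP_inverse star u u' -> v * star u = 0 -> v * u' = 0.
Proof.
case=> _ h2 _ h4 vu0.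
have -> : u' = star u * star u' * u' by rewrite -starM h4 h2.
by rewrite !mulrA vu0 !mul0r.
Qed.

Lemma MP_inverseD u u' v v' :
  is_MP_inverse star u u' -> is_MP_inverse star v v' ->
  star u * v = 0 -> u * star v = 0 -> is_MP_inverse star (u + v) (u' + v').
Proof.
move=> Hu Hv uv0 vu0.
have vu0' : v * star u = 0 by rewrite -[v]starK -starM vu0 star0.
have uv0' : star v * u = 0 by rewrite -[u]starK -starM uv0 star0.
have u'v : u' * v = 0 := MP_inverse_mul_eq0 Hu uv0.
have vu' : v * u' = 0 := mul_MP_inverse_eq0 Hu vu0'.
have v'u : v' * u = 0 := MP_inverse_mul_eq0 Hv uv0'.
have uv' : u * v' = 0 := mul_MP_inverse_eq0 Hv vu0.
have [h1 h2 h3 h4] := Hu; have [g1 g2 g3 g4] := Hv.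
have uvR : (u + v) * (u' + v') = u * u' + v * v'.
  by rewrite mulrDl !mulrDr uv' vu' addr0 add0r.
have uvL : (u' + v') * (u + v) = u' * u + v' * v.
  by rewrite mulrDl !mulrDr u'v v'u addr0 add0r.
split; rewrite ?uvR ?uvL ?starD ?h3 ?h4 ?g3 ?g4 // mulrDl !mulrDr.
- by rewrite -(mulrA u u' v) u'v -(mulrA v v' u) v'u !mulr0 addr0 add0r h1 g1.
- by rewrite -(mulrA u' u v') uv' -(mulrA v' v u') vu' !mulr0 addr0 add0r h2 g2.
Qed.

Section Intertwining.
Variables a b c d : R.
Hypotheses (sa : star a = a) (sc : star c = c) (sd : star d = d).
Hypothesis MPab : is_MP_inverse star a b.
Hypotheses (cad : c * a = a * d) (dac : d * a = a * c).

(* x (a b) = a y b = (a b) x (a b), and the right-hand side is hermitian. *)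
Lemma intertwiner_comm_range_proj (x y : R) :
  star x = x -> x * a = a * y -> x * (a * b) = a * b * x.
Proof.
move=> sx xay; have [h1 _ h3 _] := MPab.
have xab : x * (a * b) = a * b * x * (a * b).
  have -> : x * (a * b) = a * y * b by rewrite mulrA xay.
  by rewrite mulrA -(mulrA (a * b) x a) xay mulrA h1.
have := f_equal star xab.
by rewrite starM h3 sx starM h3 starM h3 sx mulrA -xab => ->.
Qed.

Lemma MP_inverse_cut : c * c = c -> is_MP_inverse star (c * a) (b * c).
Proof.
move=> cc; have [h1 h2 h3 _] := MPab.
have ab := MP_inverse_hermitian_comm sa MPab.
have cab := intertwiner_comm_range_proj sc cad.
have dab := intertwiner_comm_range_proj sd dac.
have eR : c * a * (b * c) = a * b * c.
  by rewrite mulrA -(mulrA c a b) cab -mulrA cc.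
have eL' : b * c * (c * a) = b * c * a by rewrite mulrA -(mulrA b c c) cc.
have eL : b * c * (c * a) = a * b * d by rewrite eL' -mulrA cad mulrA -ab.
split.
- by rewrite eR -mulrA (mulrA c c a) cc cad mulrA h1.
- by rewrite eL' -(mulrA b c a) -mulrA eR mulrA mulrA h2.
- by rewrite eR starM h3 sc cab.
- by rewrite eL starM h3 sd dab.
Qed.

End Intertwining.

Section Projections.
Variables p q : R.
Hypotheses (Pp : projection star p) (Pq : projection star q).

Lemma projection_sub_split : p - q = p * (1 - q) + - ((1 - p) * q).
Proof. by rewrite mulrBr mulrBl mulr1 mul1r opprB addrA subrK. Qed.

Lemma MP_inverse_projection_sub x y :
  is_MP_inverse star (p * (1 - q)) x -> is_MP_inverse star ((1 - p) * q) y ->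
  is_MP_inverse star (p - q) (x - y).
Proof.
have [pp sp] := Pp; have [qq sq] := Pq.
have [_ sq1] := projection_compl Pq; have [_ sp1] := projection_compl Pp.
have p1p : p * (1 - p) = 0 by rewrite mulrBr mulr1 pp subrr.
have q1q : (1 - q) * q = 0 by rewrite mulrBl mul1r qq subrr.
move=> MPx MPy; rewrite projection_sub_split.
apply: (MP_inverseD MPx (MP_inverseN MPy)).
- by rewrite starM sq1 sp mulrN !mulrA -(mulrA _ p) p1p mulr0 mul0r oppr0.
- by rewrite starN starM sp1 sq mulrN -mulrA (mulrA (1 - q)) q1q mul0r mulr0 oppr0.
Qed.

Lemma MP_inverse_projection_mul_compl b :
  is_MP_inverse star (p - q) b -> is_MP_inverse star (p * (1 - q)) (b * p).
Proof.
have [pp sp] := Pp; have [qq sq] := Pq; have [_ sq1] := projection_compl Pq.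
move=> MPb.
have -> : p * (1 - q) = p * (p - q) by rewrite !mulrBr mulr1 pp.
apply: (@MP_inverse_cut _ _ _ (1 - q)) => //; first by rewrite starB sp sq.
- by rewrite !mulrBr !mulrBl !mulr1 pp qq opprB addrA subrK.
- by rewrite !mulrBr !mulrBl !mul1r pp qq subrr subr0.
Qed.

End Projections.

End StarRing.

Theorem theorem2p7 (R : pzRingType) (star : R -> R) (p q : R) :
  involution star -> projection star p -> projection star q ->
  ((MP_invertible star (p * (1 - q)) /\ MP_invertible star ((1 - p) * q))
   <-> MP_invertible star (p - q)).
Proof.
move=> Hs Pp Pq; split.
  by case=> [[x MPx] [y MPy]]; exists (x - y); apply: MP_inverse_projection_sub.
case=> b MPb; split; first by exists (b * p); apply: MP_inverse_projection_mul_compl.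
exists (- b * (1 - p)).
have -> : (1 - p) * q = (1 - p) * (1 - (1 - q)) by rewrite subKr.
apply: (MP_inverse_projection_mul_compl Hs (projection_compl Hs Pp)
                                         (projection_compl Hs Pq)).
have -> : 1 - p - (1 - q) = - (p - q) by rewrite opprB addrC subrKA opprB.
exact: MP_inverseN.
Qed.
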